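(* Let $\mathcal{LS}_{\mathfrak{A}_1}\langle X\rangle$ be the free algebra over a field of characteristic $0$ in the variety of left-symmetric algebras satisfying $(ab)c+(ba)c+(ac)b+(ca)b+(bc)a+(cb)a=0$, and equip it with the anticommutator $\{a,b\}=ab+ba$. Then every polynomial identity of degree at most $4$ satisfied by $(\mathcal{LS}_{\mathfrak{A}_1}\langle X\rangle,\{\cdot,\cdot\})$ is a consequence of commutativity.
   Context: A left-symmetric algebra is an algebra with $(a,b,c)=(b,a,c)$, where $(a,b,c)=(ab)c-a(bc)$. *)

From HB Require Import structures.
From mathcomp Require Import all_boot all_order all_algebra.
Set Implicit Arguments. Unset Strict Implicit. Unset Printing Implicit Defensive.
Import GRing.Theory.
Local Open Scope ring_scope.

(* Syntactic nonassociative polynomials over F in the countably many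
   variables x_0, x_1, ... (the set X is identified with nat). *)
Inductive term (F : Type) : Type :=
  | tvar of nat
  | tzero
  | tadd of term F & term F
  | tscale of F & term F
  | tmul of term F & term F.
Arguments tzero {F}.
Arguments tvar {F} _%_N.

Section Terms.
Variable F : fieldType.
Local Notation term := (term F).

Definition tsub (a b : term) : term := tadd a (tscale (-1) b).

Fixpoint subst (s : nat -> term) (t : term) : term :=
  match t with
  | tvar i => s i
  | tzero => tzero
  | tadd a b => tadd (subst s a) (subst s b)
  | tscale c a => tscale c (subst s a)
  | tmul a b => tmul (subst s a) (subst s b)
  end.

Fixpoint anti_eval (s : nat -> term) (t : term) : term :=
  match t with
  | tvar i => s i
  | tzero => tzero
  | tadd a b => tadd (anti_eval s a) (anti_eval s b)
  | tscale c a => tscale c (anti_eval s a)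
  | tmul a b => let u := anti_eval s a in let v := anti_eval s b in
                tadd (tmul u v) (tmul v u)
  end.

(* syntactic degree; every element of the free algebra lying in the span of
   monomials of degree <= d has a representative with tdeg <= d *)
Fixpoint tdeg (t : term) : nat :=
  match t with
  | tvar _ => 1
  | tzero => 0
  | tadd a b => maxn (tdeg a) (tdeg b)
  | tscale _ a => tdeg a
  | tmul a b => tdeg a + tdeg b
  end.

(* teq S a b : a = b in the free nonassociative algebra F<X> modulo the
   T-ideal generated by the identities S (i.e. in the relatively free algebra
   of the variety defined by S). *)
Inductive teq (S : term -> Prop) : term -> term -> Prop :=
  | teq_refl a : teq S a a
  | teq_sym a b : teq S a b -> teq S b a
  | teq_trans a b c : teq S a b -> teq S b c -> teq S a c
  | teq_add a a' b b' : teq S a a' -> teq S b b' -> teq S (tadd a b) (tadd a' b')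
  | teq_scale c a a' : teq S a a' -> teq S (tscale c a) (tscale c a')
  | teq_mul a a' b b' : teq S a a' -> teq S b b' -> teq S (tmul a b) (tmul a' b')
  | teq_addA a b c : teq S (tadd a (tadd b c)) (tadd (tadd a b) c)
  | teq_addC a b : teq S (tadd a b) (tadd b a)
  | teq_add0 a : teq S (tadd tzero a) a
  | teq_addN a : teq S (tadd a (tscale (-1) a)) tzero
  | teq_scale1 a : teq S (tscale 1 a) a
  | teq_scaleA c d a : teq S (tscale c (tscale d a)) (tscale (c * d) a)
  | teq_scaleDr c a b : teq S (tscale c (tadd a b)) (tadd (tscale c a) (tscale c b))
  | teq_scaleDl c d a : teq S (tscale (c + d) a) (tadd (tscale c a) (tscale d a))
  | teq_mulDl a b c : teq S (tmul (tadd a b) c) (tadd (tmul a c) (tmul b c))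
  | teq_mulDr a b c : teq S (tmul a (tadd b c)) (tadd (tmul a b) (tmul a c))
  | teq_mulZl c a b : teq S (tmul (tscale c a) b) (tscale c (tmul a b))
  | teq_mulZr c a b : teq S (tmul a (tscale c b)) (tscale c (tmul a b))
  | teq_id f s : S f -> teq S (subst s f) tzero.

Definition tx0 : term := tvar 0%N.
Definition tx1 : term := tvar 1%N.
Definition tx2 : term := tvar 2%N.

Definition tassoc (a b c : term) : term := tsub (tmul (tmul a b) c) (tmul a (tmul b c)).

Definition ls_id : term := tsub (tassoc tx0 tx1 tx2) (tassoc tx1 tx0 tx2).

Definition A1_id : term :=
  tadd (tmul (tmul tx0 tx1) tx2) (tadd (tmul (tmul tx1 tx0) tx2)
  (tadd (tmul (tmul tx0 tx2) tx1) (tadd (tmul (tmul tx2 tx0) tx1)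
  (tadd (tmul (tmul tx1 tx2) tx0) (tmul (tmul tx2 tx1) tx0))))).

Definition LSA1 (f : term) : Prop := f = ls_id \/ f = A1_id.

Definition comm_ids (f : term) : Prop := f = tsub (tmul tx0 tx1) (tmul tx1 tx0).

Definition is_anti_identity_LSA1 (f : term) : Prop :=
  forall s : nat -> term, teq LSA1 (anti_eval s f) tzero.

Definition consequence_of_comm (f : term) : Prop := teq comm_ids f tzero.

End Terms.

From HB Require Import structures.
From mathcomp Require Import all_boot all_order all_algebra.
From mathcomp Require Import zify ring.
From Stdlib Require Import Setoid Morphisms.
Set Implicit Arguments. Unset Strict Implicit. Unset Printing Implicit Defensive.
Import GRing.Theory.
Local Open Scope ring_scope.

(* Over a field, [f] is a consequence of commutativity as soon as all its
   coefficients vanish in the basis of the free commutative nonassociative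
   algebra given by nonassociative monomials up to commutation of factors.
   These coefficients are recovered from the values of [f] in the
   anticommutator algebra of LS_{A_1}<X> through an explicit integral map
   [psi] sending monomials of degree at most 4 to combinations of monomials.
   Two finite computations on standard labellings show that
   - composed with the anticommutator expansion, [psi] is 24 times the
     identity modulo commutativity;
   - in every multiplication context, [psi] annihilates every instance of the
     left-symmetric and A_1 identities, so that each coefficient of [psi]
     factors through LS_{A_1}<X>.
   The evaluation of [f] at the generators is 0 in LS_{A_1}<X>, hence
   24 times each coefficient of [f] vanishes, and characteristic 0 concludes. *)

Inductive monomial : Type := mvar of nat | mmul of monomial & monomial.

Local Notation "''x_' i" := (mvar i) (at level 8, i at level 2, format "''x_' i").
Local Infix "**" := mmul (at level 40, left associativity).

Fixpoint monomial_eqb (a b : monomial) : bool :=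
  match a, b with
  | 'x_i, 'x_j => i == j
  | a1 ** a2, b1 ** b2 => monomial_eqb a1 b1 && monomial_eqb a2 b2
  | _, _ => false
  end.

Lemma monomial_eqP : Equality.axiom monomial_eqb.
Proof.
elim=> [i|a1 IH1 a2 IH2] [j|b1 b2] /=; try by constructor.
- by apply: (iffP eqP) => [->|[]].
- by apply: (iffP andP) => [[/IH1 -> /IH2 ->]|[<- <-]]; split; [apply/IH1|apply/IH2].
Qed.

HB.instance Definition _ := hasDecEq.Build monomial monomial_eqP.

Fixpoint msize (w : monomial) : nat :=
  match w with mvar _ => 1 | a ** b => msize a + msize b end%N.

Fixpoint labels (w : monomial) : seq nat :=
  match w with 'x_i => [:: i] | a ** b => labels a ++ labels b end.

Fixpoint relabel (l : nat -> nat) (w : monomial) : monomial :=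
  match w with 'x_i => 'x_(l i) | a ** b => relabel l a ** relabel l b end.

Fixpoint std_from (k : nat) (w : monomial) : monomial :=
  match w with mvar _ => 'x_k | a ** b => std_from k a ** std_from (k + msize a) b end.

Definition std (w : monomial) : monomial := std_from 0 w.

Lemma msize_gt0 w : (0 < msize w)%N.
Proof. by elim: w => //= a IHa b IHb; rewrite addn_gt0 IHa. Qed.

Lemma size_labels w : size (labels w) = msize w.
Proof. by elim: w => //= a IHa b IHb; rewrite size_cat IHa IHb. Qed.

Lemma msize_relabel l w : msize (relabel l w) = msize w.
Proof. by elim: w => //= a -> b ->. Qed.

Lemma labels_relabel l w : labels (relabel l w) = map l (labels w).
Proof. by elim: w => //= a -> b ->; rewrite map_cat. Qed.

Lemma relabel_comp l1 l2 w : relabel l1 (relabel l2 w) = relabel (l1 \o l2) w.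
Proof. by elim: w => //= a -> b ->. Qed.

Lemma eq_in_relabel l1 l2 w : {in labels w, l1 =1 l2} -> relabel l1 w = relabel l2 w.
Proof.
elim: w => [i|a IHa b IHb] /= l12; first by rewrite l12 // inE.
by rewrite IHa ?IHb // => i iw; apply: l12; rewrite mem_cat iw ?orbT.
Qed.

Lemma std_from_relabel k l w : std_from k (relabel l w) = std_from k w.
Proof. by elim: w k => //= a IHa b IHb k; rewrite IHa IHb msize_relabel. Qed.

Lemma relabel_std_from l1 l2 w :
  relabel (nth 0%N (l1 ++ labels w ++ l2)) (std_from (size l1) w) = w.
Proof.
elim: w l1 l2 => [i|a IHa b IHb] l1 l2 /=; first by rewrite nth_cat ltnn subnn.
rewrite -catA IHa; congr (_ ** _).
by have := IHb (l1 ++ labels a) l2; rewrite -!catA size_cat size_labels.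
Qed.

Lemma relabel_std w : relabel (nth 0%N (labels w)) (std w) = w.
Proof. by have := relabel_std_from [::] [::] w; rewrite cats0. Qed.

Fixpoint comm_eq (a b : monomial) : bool :=
  match a, b with
  | 'x_i, 'x_j => i == j
  | a1 ** a2, b1 ** b2 => comm_eq a1 b1 && comm_eq a2 b2 || comm_eq a1 b2 && comm_eq a2 b1
  | _, _ => false
  end.

Lemma comm_eq_refl a : comm_eq a a.
Proof. by elim: a => //= a -> b ->. Qed.

Lemma comm_eq_sym a b : comm_eq a b = comm_eq b a.
Proof.
elim: a b => [i|a1 IH1 a2 IH2] [j|b1 b2] //=.
by rewrite IH1 IH2 (IH1 b2) (IH2 b1) [comm_eq b2 a1 && _]andbC.
Qed.

Lemma comm_eq_trans b a c : comm_eq a b -> comm_eq b c -> comm_eq a c.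
Proof.
elim: b a c => [j|b1 IH1 b2 IH2] [i|a1 a2] [k|c1 c2] //=; first by move=> /eqP -> /eqP ->.
case/orP=> /andP [ab1 ab2] /orP [] /andP [bc1 bc2].
- by rewrite (IH1 _ _ ab1 bc1) (IH2 _ _ ab2 bc2).
- by rewrite (IH1 _ _ ab1 bc1) (IH2 _ _ ab2 bc2) orbT.
- by rewrite (IH2 _ _ ab1 bc2) (IH1 _ _ ab2 bc1) orbT.
- by rewrite (IH2 _ _ ab1 bc2) (IH1 _ _ ab2 bc1).
Qed.

Lemma comm_eq_relabel l a b : comm_eq a b -> comm_eq (relabel l a) (relabel l b).
Proof.
elim: a b => [i|a1 IH1 a2 IH2] [j|b1 b2] //=; first by move/eqP->.
by case/orP=> /andP [h1 h2]; rewrite ?(IH1 _ h1) ?(IH2 _ h2) ?(IH1 _ h2) ?(IH2 _ h1) ?orbT.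
Qed.

(* Contexts are stored from the hole outwards. *)
Inductive mcontext : Type :=
  | CHole
  | CLeft of mcontext & monomial
  | CRight of monomial & mcontext.

Fixpoint mcontext_eqb (C D : mcontext) : bool :=
  match C, D with
  | CHole, CHole => true
  | CLeft C1 u, CLeft D1 v => mcontext_eqb C1 D1 && (u == v)
  | CRight u C1, CRight v D1 => (u == v) && mcontext_eqb C1 D1
  | _, _ => false
  end.

Lemma mcontext_eqP : Equality.axiom mcontext_eqb.
Proof.
elim=> [|C IH u|u C IH] [|D v|v D] /=; try by constructor.
- by apply: (iffP andP) => [[/IH -> /eqP ->]|[<- <-]]; split; [apply/IH|].
- by apply: (iffP andP) => [[/eqP -> /IH ->]|[<- <-]]; split; [|apply/IH].
Qed.

HB.instance Definition _ := hasDecEq.Build mcontext mcontext_eqP.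

Fixpoint plug (D : mcontext) (x : monomial) : monomial :=
  match D with
  | CHole => x
  | CLeft D' v => plug D' (x ** v)
  | CRight v D' => plug D' (v ** x)
  end.

Fixpoint csize (D : mcontext) : nat :=
  match D with
  | CHole => 0
  | CLeft D' v => csize D' + msize v
  | CRight v D' => msize v + csize D'
  end%N.

Fixpoint crelabel (l : nat -> nat) (D : mcontext) : mcontext :=
  match D with
  | CHole => CHole
  | CLeft D' v => CLeft (crelabel l D') (relabel l v)
  | CRight v D' => CRight (relabel l v) (crelabel l D')
  end.

Fixpoint clabels (D : mcontext) : seq nat :=
  match D with
  | CHole => [::]
  | CLeft D' v | CRight v D' => labels v ++ clabels D'
  end.

Fixpoint cstd_from (k : nat) (D : mcontext) : mcontext :=
  match D with
  | CHole => CHole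
  | CLeft D' v => CLeft (cstd_from (k + msize v) D') (std_from k v)
  | CRight v D' => CRight (std_from k v) (cstd_from (k + msize v) D')
  end.

Lemma msize_plug D w : msize (plug D w) = (msize w + csize D)%N.
Proof. by elim: D w => [|D IH v|v D IH] w /=; rewrite ?addn0 // IH /=; lia. Qed.

Lemma relabel_plug l D w : relabel l (plug D w) = plug (crelabel l D) (relabel l w).
Proof. by elim: D w => [|D IH v|v D IH] w //=; rewrite IH. Qed.

Lemma crelabel_cstd_from l1 l2 D :
  crelabel (nth 0%N (l1 ++ clabels D ++ l2)) (cstd_from (size l1) D) = D.
Proof.
elim: D l1 l2 => [|D IH v|v D IH] l1 l2 //=; rewrite -catA relabel_std_from;
  by have := IH (l1 ++ labels v) l2; rewrite -!catA size_cat size_labels => ->.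
Qed.

Section LinearCombinations.
Variable R : pzSemiRingType.
Implicit Types (p q : seq (R * monomial)) (h : monomial -> R).

Definition lsum p h : R := foldr (fun x acc => x.1 * h x.2 + acc) 0 p.

Lemma lsumE p h : lsum p h = \sum_(x <- p) x.1 * h x.2.
Proof. by elim: p => [|x p IH]; rewrite ?big_nil ?big_cons //= IH. Qed.

Lemma lsum_cat p q h : lsum (p ++ q) h = lsum p h + lsum q h.
Proof. by elim: p => [|x p IH] /=; rewrite ?add0r // IH addrA. Qed.

Lemma eq_in_lsum p h1 h2 :
  (forall x, x \in p -> h1 x.2 = h2 x.2) -> lsum p h1 = lsum p h2.
Proof. by move=> eq_h; rewrite !lsumE; apply: eq_big_seq => x /eq_h ->. Qed.

Lemma eq_lsum p h1 h2 : h1 =1 h2 -> lsum p h1 = lsum p h2.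
Proof. by move=> eq_h; apply: eq_in_lsum => x _. Qed.

Lemma lsum0 p : lsum p (fun _ => 0) = 0.
Proof. by elim: p => //= x p ->; rewrite mulr0 addr0. Qed.

Lemma lsum_eq0 p h : (forall w, h w = 0) -> lsum p h = 0.
Proof. by move=> h0; rewrite -(lsum0 p); apply: eq_lsum. Qed.

Lemma lsum_add p h1 h2 : lsum p (fun w => h1 w + h2 w) = lsum p h1 + lsum p h2.
Proof. by rewrite !lsumE -big_split; apply: eq_bigr => x _; rewrite mulrDr. Qed.

Lemma lsum_mulr p h c : lsum p (fun w => h w * c) = lsum p h * c.
Proof. by rewrite !lsumE mulr_suml; apply: eq_bigr => x _; rewrite mulrA. Qed.

Lemma lsum_filter p (P : pred monomial) h :
  lsum [seq x <- p | P x.2] h = lsum p (fun w => if P w then h w else 0).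
Proof. by elim: p => //= x p IH; case: (P x.2) => /=; rewrite IH // mulr0 add0r. Qed.

Lemma lsum_partition p (P : pred monomial) h :
  lsum p h = lsum [seq x <- p | P x.2] h + lsum [seq x <- p | ~~ P x.2] h.
Proof.
elim: p => [|x p IH] /=; first by rewrite addr0.
by rewrite IH; case: (P x.2) => /=; [exact: addrA | exact: addrCA].
Qed.

Definition scale_lin (c : R) p := [seq (c * x.1, x.2) | x <- p].

Lemma lsum_scale c p h : lsum (scale_lin c p) h = c * lsum p h.
Proof. by rewrite !lsumE big_map mulr_sumr; apply: eq_bigr => x _; rewrite mulrA. Qed.

Definition mul_lin p q := [seq (x.1 * y.1, x.2 ** y.2) | x <- p, y <- q].

Lemma lsum_mul p q h :
  lsum (mul_lin p q) h = lsum p (fun u => lsum q (fun v => h (u ** v))).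
Proof.
rewrite !lsumE big_flatten big_map; apply: eq_bigr => x _.
rewrite lsumE big_map mulr_sumr; apply: eq_bigr => y _; by rewrite mulrA.
Qed.

Definition relabel_lin (l : nat -> nat) p := [seq (x.1, relabel l x.2) | x <- p].

Lemma lsum_relabel l p h : lsum (relabel_lin l p) h = lsum p (h \o relabel l).
Proof. by elim: p => //= x p ->. Qed.

Lemma relabel_lin_cat l p q : relabel_lin l (p ++ q) = relabel_lin l p ++ relabel_lin l q.
Proof. exact: map_cat. Qed.

Lemma relabel_lin_flatten (T : Type) l (s : seq T) (f : T -> seq (R * monomial)) :
  relabel_lin l (flatten (map f s)) = flatten [seq relabel_lin l (f u) | u <- s].
Proof. by rewrite /relabel_lin map_flatten -map_comp. Qed.

Definition coef p (m : monomial) : R := lsum p (fun w => (comm_eq w m)%:R).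

Definition is_zero_mod_comm p : bool := all (fun x => coef p x.2 == 0) p.

Lemma lsum_comm_class p h w0 : (forall w, comm_eq w w0 -> h w = h w0) ->
  lsum [seq x <- p | comm_eq x.2 w0] h = coef p w0 * h w0.
Proof.
move=> h_w0; rewrite (lsum_filter _ (comm_eq^~ w0)) /coef -lsum_mulr; apply: eq_lsum => w.
by case: ifP => [/h_w0 ->|_]; rewrite ?mul1r ?mul0r.
Qed.

Lemma coef_filter_comm_class p w0 m :
  coef [seq x <- p | ~~ comm_eq x.2 w0] m = if comm_eq w0 m then 0 else coef p m.
Proof.
rewrite /coef (lsum_filter _ (fun w => ~~ comm_eq w w0)); case: ifP => w0m.
  rewrite -[RHS](lsum0 p); apply: eq_lsum => w.
  case: (boolP (comm_eq w m)) => [wm|_]; last by case: ifP.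
  by rewrite (@comm_eq_trans m) // comm_eq_sym.
apply: eq_lsum => w; case: (boolP (comm_eq w w0)) => //= w_w0.
case: (boolP (comm_eq w m)) => // wm.
by move: w0m; rewrite (@comm_eq_trans w) // comm_eq_sym.
Qed.

Lemma lsum_comm_invariant_eq0 p h :
  (forall m, coef p m = 0) -> (forall a b, comm_eq a b -> h a = h b) -> lsum p h = 0.
Proof.
move=> p0 h_inv; have [n] := ubnP (size p); elim: n p p0 => // n IHn [|x p] // p0 szp.
rewrite (lsum_partition _ (comm_eq^~ x.2)) lsum_comm_class => [|w]; last exact: h_inv.
rewrite p0 mul0r add0r IHn // => [m|]; first by rewrite coef_filter_comm_class p0 if_same.
by rewrite /= comm_eq_refl /= size_filter (leq_ltn_trans (count_size _ _)).
Qed.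

Lemma is_zero_mod_commP p : reflect (forall m, coef p m = 0) (is_zero_mod_comm p).
Proof.
apply: (iffP allP) => [p0 m|p0 x _]; last by rewrite p0.
case: (boolP (has (fun x => comm_eq x.2 m) p)) => [/hasP[x xp xm]|].
  rewrite -(eqP (p0 x xp)); apply: eq_lsum => w; congr (nat_of_bool _)%:R.
  apply/idP/idP => [wm|wx]; last exact: comm_eq_trans wx xm.
  by apply: comm_eq_trans wm _; rewrite comm_eq_sym.
rewrite -all_predC => /allP npm; rewrite /coef -(lsum0 p); apply: eq_in_lsum => x /npm /=.
by move/negbTE ->.
Qed.

Lemma coef_relabel_eq0 l p :
  (forall m, coef p m = 0) -> forall m, coef (relabel_lin l p) m = 0.
Proof.
move=> p0 m; rewrite /coef lsum_relabel; apply: lsum_comm_invariant_eq0 => // a b ab /=.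
have lab := comm_eq_relabel l ab; congr (nat_of_bool _)%:R.
apply/idP/idP => [am|bm]; apply: comm_eq_trans; [|exact: am|exact: lab|exact: bm].
by rewrite comm_eq_sym.
Qed.

Lemma coef_cat p q m : coef (p ++ q) m = coef p m + coef q m.
Proof. exact: lsum_cat. Qed.

Lemma coef_flatten (T : Type) (s : seq T) (f : T -> seq (R * monomial)) m :
  coef (flatten (map f s)) m = \sum_(u <- s) coef (f u) m.
Proof. by elim: s => [|u s IH] /=; rewrite ?big_nil ?big_cons // coef_cat IH. Qed.

End LinearCombinations.

Add Parametric Morphism (R : pzSemiRingType) (p : seq (R * monomial)) : (lsum p)
  with signature pointwise_relation monomial eq ==> eq as lsum_morphism.
Proof. exact: eq_lsum. Qed.

Section CommutativeLinearCombinations.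
Variable R : comPzSemiRingType.
Implicit Types (p q : seq (R * monomial)) (h : monomial -> R).

Lemma lsum_mull p h c : lsum p (fun w => c * h w) = c * lsum p h.
Proof. by rewrite mulrC -lsum_mulr; apply: eq_lsum => w; rewrite mulrC. Qed.

Lemma lsum_swap p q (k : monomial -> monomial -> R) :
  lsum p (fun u => lsum q (fun v => k u v)) = lsum q (fun v => lsum p (fun u => k u v)).
Proof.
rewrite !lsumE; under eq_bigr do rewrite lsumE mulr_sumr.
rewrite exchange_big /=; apply: eq_bigr => y _; rewrite lsumE mulr_sumr.
by apply: eq_bigr => x _; rewrite mulrCA.
Qed.

Definition lsum3 (p0 p1 p2 : seq (R * monomial)) (k : monomial -> monomial -> monomial -> R) :=
  lsum p0 (fun a => lsum p1 (fun b => lsum p2 (fun c => k a b c))).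

Section Permutations.
Variables (p0 p1 p2 : seq (R * monomial)) (k : monomial -> monomial -> monomial -> R).

Lemma lsum3_102 : lsum p1 (fun b => lsum p0 (fun a => lsum p2 (fun c => k a b c))) = lsum3 p0 p1 p2 k.
Proof. by rewrite /lsum3 lsum_swap. Qed.

Lemma lsum3_021 : lsum p0 (fun a => lsum p2 (fun c => lsum p1 (fun b => k a b c))) = lsum3 p0 p1 p2 k.
Proof. by apply: eq_lsum => a; rewrite lsum_swap. Qed.

Lemma lsum3_201 : lsum p2 (fun c => lsum p0 (fun a => lsum p1 (fun b => k a b c))) = lsum3 p0 p1 p2 k.
Proof. by rewrite lsum_swap lsum3_021. Qed.

Lemma lsum3_120 : lsum p1 (fun b => lsum p2 (fun c => lsum p0 (fun a => k a b c))) = lsum3 p0 p1 p2 k.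
Proof. by rewrite -lsum3_102; apply: eq_lsum => b; rewrite lsum_swap. Qed.

Lemma lsum3_210 : lsum p2 (fun c => lsum p1 (fun b => lsum p0 (fun a => k a b c))) = lsum3 p0 p1 p2 k.
Proof. by rewrite -lsum3_201; apply: eq_lsum => c; rewrite lsum_swap. Qed.

End Permutations.

End CommutativeLinearCombinations.

(* These integers solve the finite linear system checked by
   [psi_anti_expand_std] and [psi_kills_ls_A1] below. *)
Definition psi_std (g : monomial) : seq (int * monomial) :=
  match g with
  | 'x_0 => [:: (24, 'x_0)]
  | 'x_0 ** 'x_1 => [:: (12, 'x_0 ** 'x_1)]
  | 'x_0 ** ('x_1 ** 'x_2) =>
    [:: (12, 'x_0 ** ('x_1 ** 'x_2)); (12, 'x_1 ** ('x_0 ** 'x_2)); (-12, 'x_2 ** ('x_0 ** 'x_1))]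
  | 'x_0 ** ('x_1 ** ('x_2 ** 'x_3)) =>
    [:: (12, 'x_0 ** ('x_1 ** ('x_2 ** 'x_3))); (12, 'x_0 ** ('x_2 ** ('x_1 ** 'x_3)));
        (-12, 'x_0 ** ('x_3 ** ('x_1 ** 'x_2))); (8, 'x_1 ** ('x_2 ** ('x_0 ** 'x_3)));
        (-8, 'x_1 ** ('x_3 ** ('x_0 ** 'x_2))); (-4, 'x_2 ** ('x_0 ** ('x_1 ** 'x_3)));
        (-4, 'x_2 ** ('x_1 ** ('x_0 ** 'x_3))); (-4, 'x_2 ** ('x_3 ** ('x_0 ** 'x_1)));
        (4, 'x_3 ** ('x_0 ** ('x_1 ** 'x_2))); (4, 'x_3 ** ('x_1 ** ('x_0 ** 'x_2)));
        (4, 'x_3 ** ('x_2 ** ('x_0 ** 'x_1))); (3, ('x_0 ** 'x_1) ** ('x_2 ** 'x_3));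
        (-1, ('x_0 ** 'x_2) ** ('x_1 ** 'x_3)); (1, ('x_0 ** 'x_3) ** ('x_1 ** 'x_2))]
  | 'x_0 ** ('x_1 ** 'x_2 ** 'x_3) =>
    [:: (2, 'x_1 ** ('x_0 ** ('x_2 ** 'x_3))); (6, 'x_1 ** ('x_2 ** ('x_0 ** 'x_3)));
        (-2, 'x_1 ** ('x_3 ** ('x_0 ** 'x_2))); (-2, 'x_2 ** ('x_0 ** ('x_1 ** 'x_3)));
        (-6, 'x_2 ** ('x_1 ** ('x_0 ** 'x_3))); (2, 'x_2 ** ('x_3 ** ('x_0 ** 'x_1)));
        (2, ('x_0 ** 'x_1) ** ('x_2 ** 'x_3)); (-2, ('x_0 ** 'x_2) ** ('x_1 ** 'x_3))]
  | 'x_0 ** 'x_1 ** ('x_2 ** 'x_3) =>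
    [:: (6, 'x_0 ** ('x_1 ** ('x_2 ** 'x_3))); (2, 'x_0 ** ('x_2 ** ('x_1 ** 'x_3)));
        (-2, 'x_0 ** ('x_3 ** ('x_1 ** 'x_2))); (-6, 'x_1 ** ('x_0 ** ('x_2 ** 'x_3)));
        (-2, 'x_1 ** ('x_2 ** ('x_0 ** 'x_3))); (2, 'x_1 ** ('x_3 ** ('x_0 ** 'x_2)));
        (3, ('x_0 ** 'x_1) ** ('x_2 ** 'x_3)); (-1, ('x_0 ** 'x_2) ** ('x_1 ** 'x_3));
        (1, ('x_0 ** 'x_3) ** ('x_1 ** 'x_2))]
  | 'x_0 ** ('x_1 ** 'x_2) ** 'x_3 =>
    [:: (3, ('x_0 ** 'x_1) ** ('x_2 ** 'x_3)); (-3, ('x_0 ** 'x_2) ** ('x_1 ** 'x_3));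
        (-3, ('x_0 ** 'x_3) ** ('x_1 ** 'x_2))]
  | _ => [::]
  end.

Definition psi (w : monomial) : seq (int * monomial) :=
  if (msize w <= 4)%N then
    relabel_lin (nth 0%N (labels w))
      [seq x <- psi_std (std w) | all (fun i => i < msize w)%N (labels x.2)]
  else [::].

Lemma psi_relabel l w : psi (relabel l w) = relabel_lin l (psi w).
Proof.
rewrite /psi /std msize_relabel std_from_relabel labels_relabel; case: ifP => // _.
rewrite /relabel_lin -!map_comp; apply/eq_in_map => x; rewrite mem_filter => /andP[lt_x _].
rewrite /= relabel_comp; congr (_, _); apply: eq_in_relabel => i xi /=.
by rewrite (nth_map 0%N) // size_labels; apply: (allP lt_x).
Qed.

Lemma psi_large w : (4 < msize w)%N -> psi w = [::].
Proof. by rewrite /psi ltnNge => /negbTE ->. Qed.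

Fixpoint anti_expand (w : monomial) : seq monomial :=
  match w with
  | 'x_i => [:: 'x_i]
  | a ** b => [seq u ** v | u <- anti_expand a, v <- anti_expand b] ++
              [seq v ** u | u <- anti_expand a, v <- anti_expand b]
  end.

Lemma anti_expand_relabel l w : anti_expand (relabel l w) = map (relabel l) (anti_expand w).
Proof.
elim: w => //= a IHa b IHb.
by rewrite IHa IHb map_cat !map_allpairs !allpairs_mapl !allpairs_mapr.
Qed.

Ltac destruct_small :=
  repeat match goal with
  | w : monomial |- _ =>
      let i := fresh "i" in let a := fresh "a" in let b := fresh "b" in
      destruct w as [i|a b];
      [ idtac | have ? := msize_gt0 a; have ? := msize_gt0 b ];
      simpl in *; try (exfalso; lia)
  | D : mcontext |- _ =>
      let v := fresh "v" in let D' := fresh "D" in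
      destruct D as [|D' v|v D'];
      [ idtac | have ? := msize_gt0 v | have ? := msize_gt0 v ];
      simpl in *; try (exfalso; lia)
  end.

Definition std_monomials4 : seq monomial :=
  [:: 'x_0; 'x_0 ** 'x_1; 'x_0 ** ('x_1 ** 'x_2); 'x_0 ** 'x_1 ** 'x_2;
      'x_0 ** ('x_1 ** ('x_2 ** 'x_3)); 'x_0 ** ('x_1 ** 'x_2 ** 'x_3);
      'x_0 ** 'x_1 ** ('x_2 ** 'x_3); 'x_0 ** ('x_1 ** 'x_2) ** 'x_3;
      'x_0 ** 'x_1 ** 'x_2 ** 'x_3].

Lemma std_small w : (msize w <= 4)%N -> std w \in std_monomials4.
Proof. by move=> small_w; destruct_small; vm_compute. Qed.

Definition psi_anti_defect (g : monomial) : seq (int * monomial) :=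
  flatten [seq psi u | u <- anti_expand g] ++ [:: (-24, g)].

Lemma psi_anti_expand_std : all (fun g => is_zero_mod_comm (psi_anti_defect g)) std_monomials4.
Proof. by vm_compute. Qed.

Lemma coef_psi_anti_expand w m : (msize w <= 4)%N ->
  \sum_(u <- anti_expand w) coef (psi u) m = 24 * (comm_eq w m)%:R.
Proof.
move=> small_w; rewrite -[in X in anti_expand X](relabel_std w) anti_expand_relabel big_map.
have := allP psi_anti_expand_std _ (std_small small_w).
move/is_zero_mod_commP/(coef_relabel_eq0 (nth 0%N (labels w)))/(_ m).
rewrite /psi_anti_defect relabel_lin_cat relabel_lin_flatten coef_cat coef_flatten => defect0.
under eq_bigr => u _ do rewrite psi_relabel.
move: defect0; rewrite /coef /= relabel_std; lia.
Qed.

Definition psi_lin (p : seq (int * monomial)) : seq (int * monomial) :=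
  flatten [seq scale_lin x.1 (psi x.2) | x <- p].

Lemma coef_psi_lin p m : coef (psi_lin p) m = \sum_(x <- p) x.1 * coef (psi x.2) m.
Proof.
elim: p => [|x p IH]; rewrite ?big_nil ?big_cons //=.
by rewrite coef_cat IH /coef lsum_scale.
Qed.

Lemma relabel_psi_lin l p : relabel_lin l (psi_lin p) = psi_lin (relabel_lin l p).
Proof.
rewrite /psi_lin relabel_lin_flatten /relabel_lin -!map_comp; congr flatten.
by apply: eq_map => x /=; rewrite psi_relabel /scale_lin /relabel_lin -!map_comp.
Qed.

Definition ls_lin (a b c : monomial) : seq (int * monomial) :=
  [:: (1, a ** b ** c); (-1, a ** (b ** c)); (-1, b ** a ** c); (1, b ** (a ** c))].

Definition A1_lin (a b c : monomial) : seq (int * monomial) :=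
  [:: (1, a ** b ** c); (1, b ** a ** c); (1, a ** c ** b);
      (1, c ** a ** b); (1, b ** c ** a); (1, c ** b ** a)].

Definition small_configs : seq (monomial * monomial * monomial * mcontext) :=
  [:: ('x_0, 'x_1, 'x_2, CHole); ('x_0, 'x_1, 'x_2, CLeft CHole 'x_3);
      ('x_0, 'x_1, 'x_2, CRight 'x_3 CHole); ('x_0 ** 'x_1, 'x_2, 'x_3, CHole);
      ('x_0, 'x_1 ** 'x_2, 'x_3, CHole); ('x_0, 'x_1, 'x_2 ** 'x_3, CHole)].

Definition plug_lin (D : mcontext) (p : seq (int * monomial)) := [seq (x.1, plug D x.2) | x <- p].

Lemma relabel_plug_lin l D p :
  relabel_lin l (plug_lin D p) = plug_lin (crelabel l D) (relabel_lin l p).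
Proof. by rewrite /relabel_lin /plug_lin -!map_comp; apply: eq_map => x /=; rewrite relabel_plug. Qed.

Definition psi_kills_small_configs (G : monomial -> monomial -> monomial -> seq (int * monomial)) :=
  all (fun '(a, b, c, D) => is_zero_mod_comm (psi_lin (plug_lin D (G a b c))))
    small_configs.

Lemma psi_kills_ls_A1 : psi_kills_small_configs ls_lin && psi_kills_small_configs A1_lin.
Proof. by vm_compute. Qed.

Lemma std_small_config a b c D : (msize a + msize b + msize c + csize D <= 4)%N ->
  (std_from 0 a, std_from (msize a) b, std_from (msize a + msize b) c,
   cstd_from (msize a + msize b + msize c) D) \in small_configs.
Proof. by move=> small; destruct_small; vm_compute. Qed.

Section KillInstances.
Variable G : monomial -> monomial -> monomial -> seq (int * monomial).
Hypothesis G_relabel : forall l a b c,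
  G (relabel l a) (relabel l b) (relabel l c) = relabel_lin l (G a b c).
Hypothesis G_homogeneous : forall a b c,
  all (fun x => msize x.2 == msize a + msize b + msize c)%N (G a b c).
Hypothesis psi_kills_G : psi_kills_small_configs G.

Lemma psi_kills_instances D a b c m :
  \sum_(x <- G a b c) x.1 * coef (psi (plug D x.2)) m = 0.
Proof.
case: (leqP (msize a + msize b + msize c + csize D) 4) => [small|large]; last first.
  rewrite big_seq big1 // => x /(allP (G_homogeneous a b c)) /eqP size_x.
  by rewrite psi_large ?mulr0 // msize_plug size_x.
have := allP psi_kills_G _ (std_small_config small) => /= /is_zero_mod_commP.
set l := nth 0%N (labels a ++ labels b ++ labels c ++ clabels D).
have la : relabel l (std_from 0 a) = a by rewrite /l (relabel_std_from [::]).
have lb : relabel l (std_from (msize a) b) = b by rewrite /l -(size_labels a) relabel_std_from.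
have lc : relabel l (std_from (msize a + msize b) c) = c.
  by rewrite /l catA -(size_labels a) -(size_labels b) -size_cat relabel_std_from.
have lD : crelabel l (cstd_from (msize a + msize b + msize c) D) = D.
  have := crelabel_cstd_from ((labels a ++ labels b) ++ labels c) [::] D.
  by rewrite cats0 !size_cat !size_labels -!catA.
move=> /(coef_relabel_eq0 l)/(_ m).
by rewrite relabel_psi_lin relabel_plug_lin -G_relabel la lb lc lD coef_psi_lin big_map.
Qed.

End KillInstances.

Lemma psi_kills_ls D a b c m : \sum_(x <- ls_lin a b c) x.1 * coef (psi (plug D x.2)) m = 0.
Proof.
apply: psi_kills_instances => [//|a' b' c' /=|]; first lia.
by case/andP: psi_kills_ls_A1.
Qed.

Lemma psi_kills_A1 D a b c m : \sum_(x <- A1_lin a b c) x.1 * coef (psi (plug D x.2)) m = 0.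
Proof.
apply: psi_kills_instances => [//|a' b' c' /=|]; first lia.
by case/andP: psi_kills_ls_A1.
Qed.

Section Expansion.
Variable F : fieldType.
Local Notation term := (term F).

Fixpoint mterm (w : monomial) : term :=
  match w with 'x_i => tvar i | a ** b => tmul (mterm a) (mterm b) end.

Fixpoint expand (t : term) : seq (F * monomial) :=
  match t with
  | tvar i => [:: (1, 'x_i)]
  | tzero => [::]
  | tadd a b => expand a ++ expand b
  | tscale c a => scale_lin c (expand a)
  | tmul a b => mul_lin (expand a) (expand b)
  end.

Lemma msize_expand t x : x \in expand t -> (msize x.2 <= tdeg t)%N.
Proof.
elim: t x => [i||a IHa b IHb|c a IHa|a IHa b IHb] x /=.
- by rewrite inE => /eqP ->.
- by [].
- by rewrite mem_cat => /orP[/IHa|/IHb] /leq_trans; apply; rewrite ?leq_maxl ?leq_maxr.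
- by case/mapP=> y /IHa le_y ->.
- by case/allpairsP=> [[y z] [/= /IHa le_y /IHb le_z ->]]; apply: leq_add.
Qed.

Definition ctx_form (h : monomial -> F) (D : mcontext) (t : term) : F :=
  lsum (expand t) (fun w => h (plug D w)).

Lemma ctx_formD h D a b : ctx_form h D (tadd a b) = ctx_form h D a + ctx_form h D b.
Proof. exact: lsum_cat. Qed.

Lemma ctx_formZ h D c a : ctx_form h D (tscale c a) = c * ctx_form h D a.
Proof. exact: lsum_scale. Qed.

Lemma ctx_form0 h D : ctx_form h D tzero = 0.
Proof. by []. Qed.

Lemma ctx_form_mulr h D a b :
  ctx_form h D (tmul a b) = lsum (expand a) (fun u => ctx_form h (CRight u D) b).
Proof. exact: lsum_mul. Qed.

Lemma ctx_form_mull h D a b :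
  ctx_form h D (tmul a b) = lsum (expand b) (fun v => ctx_form h (CLeft D v) a).
Proof. by rewrite /ctx_form /= lsum_mul lsum_swap. Qed.

Lemma ctx_form_teq (S : term -> Prop) h :
  (forall f s D, S f -> ctx_form h D (subst s f) = 0) ->
  forall a b, teq S a b -> forall D, ctx_form h D a = ctx_form h D b.
Proof.
move=> S0 a b ab; induction ab => D.
- by [].
- by rewrite IHab.
- by rewrite IHab1 IHab2.
- by rewrite !ctx_formD IHab1 IHab2.
- by rewrite !ctx_formZ IHab.
- rewrite ctx_form_mulr (eq_lsum _ (fun u => IHab2 (CRight u D))) -ctx_form_mulr.
  by rewrite !ctx_form_mull; apply: eq_lsum => v.
- by rewrite !ctx_formD addrA.
- by rewrite !ctx_formD addrC.
- by rewrite ctx_formD add0r.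
- by rewrite ctx_formD ctx_formZ mulN1r subrr.
- by rewrite ctx_formZ mul1r.
- by rewrite !ctx_formZ mulrA.
- by rewrite ctx_formZ !ctx_formD mulrDr !ctx_formZ.
- by rewrite ctx_formD !ctx_formZ mulrDl.
- by rewrite ctx_formD !ctx_form_mull -lsum_add; apply: eq_lsum => v; rewrite ctx_formD.
- by rewrite ctx_formD !ctx_form_mulr -lsum_add; apply: eq_lsum => u; rewrite ctx_formD.
- by rewrite ctx_formZ !ctx_form_mull -lsum_mull; apply: eq_lsum => v; rewrite ctx_formZ.
- by rewrite ctx_formZ !ctx_form_mulr -lsum_mull; apply: eq_lsum => u; rewrite ctx_formZ.
- exact: S0.
Qed.

Definition psi_form (m w : monomial) : F := (coef (psi w) m)%:~R.

Local Ltac lsum_eq0_pointwise x :=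
  repeat (rewrite -lsum_mull || rewrite -lsum_add); apply: lsum_eq0 => x /=.

(* Both identities are multilinear, so an instance of one of them expands to a
   triple sum over the monomials of [s 0], [s 1] and [s 2]. *)
Lemma ctx_form_psi_ls m D s : ctx_form (psi_form m) D (subst s (ls_id F)) = 0.
Proof.
rewrite /ctx_form /ls_id /tassoc /tsub /= !lsum_cat !lsum_scale !lsum_cat !lsum_scale.
do 2 setoid_rewrite lsum_mul.
set E0 := expand (s 0%N); set E1 := expand (s 1%N); set E2 := expand (s 2%N).
rewrite (lsum3_102 E0 E1 E2 (fun a b c => psi_form m (plug D (b ** a ** c))))
        (lsum3_102 E0 E1 E2 (fun a b c => psi_form m (plug D (b ** (a ** c))))) /lsum3.
lsum_eq0_pointwise a; lsum_eq0_pointwise b; lsum_eq0_pointwise c.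
have := congr1 (intr : int -> F) (psi_kills_ls D a b c m).
rewrite /= !big_cons big_nil /psi_form !rmorphD !rmorphM /= => K.
apply: etrans _ K; ring.
Qed.

Lemma ctx_form_psi_A1 m D s : ctx_form (psi_form m) D (subst s (A1_id F)) = 0.
Proof.
rewrite /ctx_form /A1_id /= !lsum_cat.
do 2 setoid_rewrite lsum_mul.
set E0 := expand (s 0%N); set E1 := expand (s 1%N); set E2 := expand (s 2%N).
rewrite (lsum3_102 E0 E1 E2 (fun a b c => psi_form m (plug D (b ** a ** c))))
        (lsum3_021 E0 E1 E2 (fun a b c => psi_form m (plug D (a ** c ** b))))
        (lsum3_201 E0 E1 E2 (fun a b c => psi_form m (plug D (c ** a ** b))))
        (lsum3_120 E0 E1 E2 (fun a b c => psi_form m (plug D (b ** c ** a))))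
        (lsum3_210 E0 E1 E2 (fun a b c => psi_form m (plug D (c ** b ** a)))) /lsum3.
lsum_eq0_pointwise a; lsum_eq0_pointwise b; lsum_eq0_pointwise c.
have := congr1 (intr : int -> F) (psi_kills_A1 D a b c m).
rewrite /= !big_cons big_nil /psi_form !rmorphD !rmorphM /= => K.
apply: etrans _ K; ring.
Qed.

Lemma ctx_form_psi_LSA1 m f s D : LSA1 f -> ctx_form (psi_form m) D (subst s f) = 0.
Proof. by case=> ->; [apply: ctx_form_psi_ls | apply: ctx_form_psi_A1]. Qed.

Lemma sum_lsum (s : seq monomial) p (k : monomial -> monomial -> F) :
  \sum_(u <- s) lsum p (k u) = lsum p (fun v => \sum_(u <- s) k u v).
Proof.
rewrite lsumE; under eq_bigr do rewrite lsumE.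
by rewrite exchange_big; apply: eq_bigr => x _; rewrite mulr_sumr.
Qed.

Lemma lsum_anti_eval t h : lsum (expand (anti_eval (@tvar F) t)) h =
  lsum (expand t) (fun w => \sum_(u <- anti_expand w) h u).
Proof.
elim: t h => [i||a IHa b IHb|c a IHa|a IHa b IHb] h /=.
- by rewrite big_seq1 /= mul1r.
- by [].
- by rewrite !lsum_cat IHa IHb.
- by rewrite !lsum_scale IHa.
- rewrite lsum_cat !lsum_mul (lsum_swap (expand (anti_eval _ b))) -lsum_add IHa.
  apply: eq_lsum => w; under eq_bigr => u _ do rewrite -lsum_add.
  rewrite sum_lsum IHb; apply: eq_lsum => w' /=.
  rewrite big_cat !big_allpairs_dep /= -big_split exchange_big /=.
  by apply: eq_bigr => u _; rewrite big_split.
Qed.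

Lemma anti_identity_coef_eq0 f : (24%:R : F) != 0 -> (tdeg f <= 4)%N ->
  is_anti_identity_LSA1 f -> forall m, coef (expand f) m = 0.
Proof.
move=> nz24 deg_f anti_f m.
have := ctx_form_teq (@ctx_form_psi_LSA1 m) (anti_f (@tvar F)) CHole.
rewrite ctx_form0 /ctx_form lsum_anti_eval.
rewrite (eq_in_lsum (h2 := fun w => 24%:R * (comm_eq w m)%:R)) => [|x /msize_expand le_x].
  by rewrite lsum_mull => /eqP; rewrite mulf_eq0 (negbTE nz24) => /eqP.
rewrite /psi_form -rmorph_sum coef_psi_anti_expand ?(leq_trans le_x) // rmorphM /= rmorph_nat.
by case: (comm_eq x.2 m).
Qed.

End Expansion.

Add Parametric Relation (F : fieldType) (S : term F -> Prop) : (term F) (teq S)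
  reflexivity proved by (@teq_refl F S)
  symmetry proved by (@teq_sym F S)
  transitivity proved by (@teq_trans F S) as teq_rel.

Add Parametric Morphism (F : fieldType) (S : term F -> Prop) : (@tadd F)
  with signature teq S ==> teq S ==> teq S as tadd_morphism.
Proof. by move=> *; apply: teq_add. Qed.

Add Parametric Morphism (F : fieldType) (S : term F -> Prop) c : (@tscale F c)
  with signature teq S ==> teq S as tscale_morphism.
Proof. by move=> *; apply: teq_scale. Qed.

Add Parametric Morphism (F : fieldType) (S : term F -> Prop) : (@tmul F)
  with signature teq S ==> teq S ==> teq S as tmul_morphism.
Proof. by move=> *; apply: teq_mul. Qed.

#[local] Hint Resolve teq_refl : core.

Section Congruence.
Variables (F : fieldType) (S : term F -> Prop).
Implicit Types (a b t : term F) (p q : seq (F * monomial)).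

Lemma teq_addr0 a : teq S (tadd a tzero) a.
Proof. by rewrite teq_addC teq_add0. Qed.

Lemma teq_double_eq0 a : teq S a (tadd a a) -> teq S a tzero.
Proof. by move=> aa; rewrite -(teq_addN S a) {2}aa -teq_addA teq_addN teq_addr0. Qed.

Lemma teq_scale0 a : teq S (tscale 0 a) tzero.
Proof. by apply: teq_double_eq0; rewrite -teq_scaleDl addr0. Qed.

Lemma teq_scaler0 c : teq S (tscale c tzero) tzero.
Proof. by apply: teq_double_eq0; rewrite -teq_scaleDr teq_add0. Qed.

Lemma teq_mul0l a : teq S (tmul tzero a) tzero.
Proof. by apply: teq_double_eq0; rewrite -teq_mulDl teq_add0. Qed.

Lemma teq_mul0r a : teq S (tmul a tzero) tzero.
Proof. by apply: teq_double_eq0; rewrite -teq_mulDr teq_add0. Qed.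

Definition lin_term p : term F :=
  foldr (fun x acc => tadd (tscale x.1 (mterm F x.2)) acc) tzero p.

Lemma lin_term_cat p q : teq S (lin_term (p ++ q)) (tadd (lin_term p) (lin_term q)).
Proof.
elim: p => [|x p IH] /=; first by rewrite teq_add0.
by rewrite IH teq_addA.
Qed.

Lemma lin_term_scale c p : teq S (lin_term (scale_lin c p)) (tscale c (lin_term p)).
Proof.
elim: p => [|x p IH] /=; first by rewrite teq_scaler0.
by rewrite IH teq_scaleDr teq_scaleA.
Qed.

Lemma lin_term_mul p q : teq S (lin_term (mul_lin p q)) (tmul (lin_term p) (lin_term q)).
Proof.
elim: p => [|x p IH] /=; first by rewrite teq_mul0l.
rewrite lin_term_cat IH teq_mulDl; apply: teq_add => //; clear IH.
elim: q => [|y q IHq] /=; first by rewrite teq_mul0r.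
rewrite IHq teq_mulDr; apply: teq_add => //.
by rewrite teq_mulZl teq_mulZr teq_scaleA.
Qed.

Lemma teq_lin_term_expand t : teq S t (lin_term (expand t)).
Proof.
elim: t => [i||a IHa b IHb|c a IHa|a IHa b IHb] /=.
- by rewrite teq_addr0 teq_scale1.
- by [].
- by rewrite lin_term_cat -IHa -IHb.
- by rewrite lin_term_scale -IHa.
- by rewrite lin_term_mul -IHa -IHb.
Qed.

Lemma lin_term_partition (P : pred monomial) p :
  teq S (lin_term p)
    (tadd (lin_term [seq x <- p | P x.2]) (lin_term [seq x <- p | ~~ P x.2])).
Proof.
elim: p => [|x p IH] /=; first by rewrite teq_add0.
case: (P x.2) => /=; rewrite IH; first by rewrite teq_addA.
by rewrite teq_addA (teq_addC S (tscale _ _)) -teq_addA.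
Qed.

End Congruence.

Section Commutativity.
Variable F : fieldType.
Local Notation comm := (@comm_ids F).

Lemma teq_comm_mulC (a b : term F) : teq comm (tmul a b) (tmul b a).
Proof.
have /= ab0 := @teq_id F comm _ (fun i => if i == 0%N then a else b) (erefl _).
transitivity (tadd (tadd (tmul a b) (tscale (-1) (tmul b a))) (tmul b a)).
  by rewrite -teq_addA (teq_addC comm (tscale _ _)) teq_addN teq_addr0.
by rewrite ab0 teq_add0.
Qed.

Lemma comm_eq_teq u v : comm_eq u v -> teq comm (mterm F u) (mterm F v).
Proof.
elim: u v => [i|a1 IH1 a2 IH2] [j|b1 b2] //=; first by move/eqP->.
case/orP=> /andP [h1 h2]; rewrite (IH1 _ h1) (IH2 _ h2) //.
exact: teq_comm_mulC.
Qed.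

Lemma lin_term_comm_class (p : seq (F * monomial)) w0 :
  teq comm (lin_term [seq x <- p | comm_eq x.2 w0]) (tscale (coef p w0) (mterm F w0)).
Proof.
elim: p => [|x p IH] /=; first by rewrite teq_scale0.
rewrite /coef /=; case: ifP => /= [x_w0|_]; last by rewrite mulr0 add0r IH.
by rewrite IH (comm_eq_teq x_w0) mulr1 teq_scaleDl.
Qed.

Lemma lin_term_eq0_mod_comm (p : seq (F * monomial)) :
  (forall m, coef p m = 0) -> teq comm (lin_term p) tzero.
Proof.
move=> p0; have [n] := ubnP (size p); elim: n p p0 => // n IHn [|x p] // p0 szp.
rewrite (lin_term_partition _ (comm_eq^~ x.2)) lin_term_comm_class p0 teq_scale0 teq_add0.
apply: IHn => [m|]; first by rewrite coef_filter_comm_class p0 if_same.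
by rewrite /= comm_eq_refl /= size_filter (leq_ltn_trans (count_size _ _)).
Qed.

End Commutativity.

Theorem mainTheorem7 (F : fieldType) (charF0 : [pchar F] =i pred0)
  (f : term F) :
  (tdeg f <= 4)%N -> is_anti_identity_LSA1 f -> consequence_of_comm f.
Proof.
move=> deg_f anti_f.
have nz24 : (24%:R : F) != 0 by rewrite (proj1 (pcharf0P F) charF0 24).
rewrite /consequence_of_comm (teq_lin_term_expand _ f).
exact/lin_term_eq0_mod_comm/anti_identity_coef_eq0.
Qed.
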